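(* Let $a\neq b$ be letters and $w=a^{n_1}b^{n_2}$ with $n_1,n_2\ge1$. Then every element of $\mathtt{BR}(w)$ is rich.
   Context: For a word $w=w_1\cdots w_n$, $w^R=w_n\cdots w_1$; $w$ is a palindrome if $w=w^R$; a factor of $w$ is a word $u$ with $w=puq$. A word $w$ is rich if the number of distinct nonempty palindromic factors of $w$ equals $|w|$. The block reversal of a nonempty word $w$ is $\mathtt{BR}(w)=\{B_t\cdots B_1 : w=B_1\cdots B_t,\ t\ge1,\ \text{each } B_i \text{ nonempty}\}$. *)

From mathcomp Require Import all_boot.
Set Implicit Arguments. Unset Strict Implicit. Unset Printing Implicit Defensive.

Section Words.
Variable T : eqType.

Definition palindrome (w : seq T) : bool := w == rev w.

Definition all_factors (w : seq T) : seq (seq T) :=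
  [seq drop i (take j w) | i <- iota 0 (size w).+1, j <- iota 0 (size w).+1].

Definition pal_factors (w : seq T) : seq (seq T) :=
  undup [seq u <- all_factors w | (u != [::]) && palindrome u].

Definition rich (w : seq T) : Prop := size (pal_factors w) = size w.

Definition in_BR (w v : seq T) : Prop :=
  exists Bs : seq (seq T),
    [/\ Bs != [::], all (fun B => B != [::]) Bs, w = flatten Bs & v = flatten (rev Bs)].

End Words.

From mathcomp Require Import all_boot zify.

(* Appending a letter to a word creates at most one new palindromic factor:
   two new ones would both be suffixes, and the shorter one, a suffix and hence
   (by symmetry) a prefix of the longer palindrome, would already occur before
   the last letter.  So a word has at most as many distinct nonempty palindromic
   factors as letters.  A block reversal of a^n1 b^n2 keeps the block that
   straddles the boundary in place, so it has the shape x^p y^i x^j y^q with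
   {x, y} = {a, b} and i, j > 0.  Such a word contains the pairwise distinct
   palindromes x^k (k <= max(p, j)), y^k (k <= max(i, q)), x^k y^i x^k
   (k <= min(p, j)) and y^k x^j y^k (k <= min(i, q)): p + i + j + q of them. *)

Set Implicit Arguments.
Unset Strict Implicit.
Unset Printing Implicit Defensive.

Section PalindromicFactors.
Variable T : eqType.
Implicit Types (u w s L : seq T) (x : T).

Lemma mem_all_factors u w : (u \in all_factors w) = infix u w.
Proof.
apply/allpairsP/idP => [[[i j] [_ _ ->]] | /infixP[s [s' ->]]].
  exact: infix_trans (infix_drop _ _) (infix_take _ _).
exists (size s, size s + size u); rewrite !mem_iota !size_cat /=; split; try lia.
by rewrite takeD take_size_cat // !drop_size_cat // take_size_cat.
Qed.

Lemma mem_pal_factors u w :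
  (u \in pal_factors w) = [&& u != [::], palindrome u & infix u w].
Proof. by rewrite mem_undup mem_filter mem_all_factors andbA. Qed.

Lemma suffix_size_inj u u' s :
  suffix u s -> suffix u' s -> size u = size u' -> u = u'.
Proof. by rewrite !suffixE => /eqP eu /eqP eu' szu; rewrite -eu -eu' szu. Qed.

Lemma suffix_of_suffixes u L s :
  suffix u s -> suffix L s -> size u <= size L -> suffix u L.
Proof.
move=> uS LS le_uL; have le_Ls := size_suffix LS.
move: uS LS; rewrite !suffixE => /eqP eu /eqP eL; apply/eqP.
by rewrite -[RHS]eu -eL drop_drop size_drop; congr drop; lia.
Qed.

Lemma palindrome_suffix_prefix u L :
  palindrome u -> palindrome L -> suffix u L -> prefix u L.
Proof. by move=> /eqP pu /eqP pL; rewrite -suffix_rev -pu -pL. Qed.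

Lemma pal_suffix_infix_belast w x u L :
  palindrome u -> palindrome L -> suffix u (rcons w x) -> suffix L (rcons w x) ->
  size u < size L -> infix u w.
Proof.
move=> pu pL uS LS ltuL.
have uL : suffix u L by apply: suffix_of_suffixes uS LS (ltnW ltuL).
have := palindrome_suffix_prefix pu pL uL.
case/lastP: L LS ltuL {pL uL} => [|L' y] //.
rewrite suffix_rcons size_rcons ltnS => /andP[_ L'w] le_uL'.
rewrite prefixE -cats1 takel_cat // -prefixE => uL'.
exact: prefix_suffix_trans uL' L'w.
Qed.

Lemma pal_factors_infix w w' u :
  u \in pal_factors w' -> infix u w -> u \in pal_factors w.
Proof. by rewrite !mem_pal_factors => /and3P[-> -> _]. Qed.

Lemma new_pal_factors_rcons_eq w x u u' :
  u \in pal_factors (rcons w x) -> ~~ infix u w ->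
  u' \in pal_factors (rcons w x) -> ~~ infix u' w -> u = u'.
Proof.
rewrite !mem_pal_factors !infix_rconsl.
move=> /and3P[_ pu /orP[uS|->//]] new_u /and3P[_ pu' /orP[u'S|->//]] new_u'.
apply: (suffix_size_inj uS u'S); case: (ltngtP (size u) (size u')) => // lt.
- by rewrite (pal_suffix_infix_belast pu pu' uS u'S lt) in new_u.
- by rewrite (pal_suffix_infix_belast pu' pu u'S uS lt) in new_u'.
Qed.

Lemma size_pal_factors_rcons w x :
  size (pal_factors (rcons w x)) <= (size (pal_factors w)).+1.
Proof.
have [/hasP[u u_in u_new] | /hasPn all_old] :=
  boolP (has (fun u => ~~ infix u w) (pal_factors (rcons w x))).
- rewrite -[_.+1]/(size (u :: pal_factors w)).
  apply: uniq_leq_size (undup_uniq _) _ => u' u'_in; rewrite inE.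
  have [u'w | u'_new] := boolP (infix u' w).
    by rewrite (pal_factors_infix u'_in u'w) orbT.
  by rewrite (new_pal_factors_rcons_eq u'_in u'_new u_in u_new) eqxx.
- apply: leqW; apply: uniq_leq_size (undup_uniq _) _ => u u_in.
  exact: pal_factors_infix u_in (negPn (all_old u u_in)).
Qed.

Lemma size_pal_factors_le w : size (pal_factors w) <= size w.
Proof.
elim/last_ind: w => // w x IH.
by rewrite size_rcons (leq_trans (size_pal_factors_rcons w x)).
Qed.

Lemma rich_of_pal_factors (ps : seq (seq T)) w :
  uniq ps -> {subset ps <= pal_factors w} -> size w <= size ps -> rich w.
Proof.
move=> us sub le_ws; apply/eqP; rewrite eqn_leq size_pal_factors_le.
exact: leq_trans le_ws (uniq_leq_size us sub).
Qed.

End PalindromicFactors.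

Lemma palindrome_nseq (T : eqType) n (c : T) : palindrome (nseq n c).
Proof. by rewrite /palindrome rev_nseq. Qed.

Lemma palindrome_cat_rev (T : eqType) (s t : seq T) :
  palindrome t -> palindrome (s ++ t ++ rev s).
Proof. by move=> /eqP pt; rewrite /palindrome !rev_cat revK -pt catA. Qed.

Lemma infix_nseq (T : eqType) m n (c : T) : m <= n -> infix (nseq m c) (nseq n c).
Proof. by move=> le_mn; rewrite -(subnKC le_mn) nseqD prefix_infix. Qed.

Lemma infix_nseq_cat_nseq (T : eqType) m n1 n2 (c : T) t :
  m <= n1 -> m <= n2 -> infix (nseq m c ++ t ++ nseq m c) (nseq n1 c ++ t ++ nseq n2 c).
Proof.
move=> le_mn1 le_mn2; apply/infixP; exists (nseq (n1 - m) c), (nseq (n2 - m) c).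
by rewrite -{1}(subnK le_mn1) -{1}(subnKC le_mn2) !nseqD -!catA.
Qed.

Lemma has_mem_neq_profile (A K : eqType) (f : A -> K) (s1 s2 : seq A) k1 k2 :
  {in s1, forall u, f u = k1} -> {in s2, forall u, f u = k2} -> k1 != k2 ->
  ~~ has (mem s1) s2.
Proof.
move=> f1 f2 neq_k; apply/hasPn => u u2; apply: contra neq_k => u1.
by rewrite -(f1 u u1) -(f2 u u2).
Qed.

Section FourBlocks.
Variables (T : eqType) (x y : T) (p i j q : nat).
Hypotheses (neq_xy : x != y) (i_gt0 : 0 < i) (j_gt0 : 0 < j).

Let v := nseq p x ++ nseq i y ++ nseq j x ++ nseq q y.

Let pals_x := [seq nseq k.+1 x | k <- iota 0 (maxn p j)].
Let pals_y := [seq nseq k.+1 y | k <- iota 0 (maxn i q)].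
Let pals_xyx := [seq nseq k.+1 x ++ nseq i y ++ nseq k.+1 x | k <- iota 0 (minn p j)].
Let pals_yxy := [seq nseq k.+1 y ++ nseq j x ++ nseq k.+1 y | k <- iota 0 (minn i q)].

Let profile (u : seq T) := (head x u == x, (x \in u) && (y \in u)).

Let neq_yx : (y == x) = false.
Proof. by rewrite eq_sym (negbTE neq_xy). Qed.

Lemma profile_pals_x : {in pals_x, forall u, profile u = (true, false)}.
Proof. by move=> _ /mapP[k _ ->]; rewrite /profile !mem_nseq neq_yx /= eqxx. Qed.

Lemma profile_pals_y : {in pals_y, forall u, profile u = (false, false)}.
Proof. by move=> _ /mapP[k _ ->]; rewrite /profile !mem_nseq (negbTE neq_xy) /= neq_yx. Qed.

Lemma profile_pals_xyx : {in pals_xyx, forall u, profile u = (true, true)}.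
Proof.
by move=> _ /mapP[k _ ->]; rewrite /profile !(mem_cat, mem_nseq) i_gt0 /= !eqxx ?orbT.
Qed.

Lemma profile_pals_yxy : {in pals_yxy, forall u, profile u = (false, true)}.
Proof.
by move=> _ /mapP[k _ ->]; rewrite /profile !(mem_cat, mem_nseq) j_gt0 neq_yx /= !eqxx ?orbT.
Qed.

Lemma uniq_pals : uniq (pals_x ++ pals_y ++ pals_xyx ++ pals_yxy).
Proof.
rewrite !cat_uniq !has_cat !negb_or !map_inj_uniq ?iota_uniq //=.
- rewrite !(has_mem_neq_profile profile_pals_x profile_pals_y)
    ?(has_mem_neq_profile profile_pals_x profile_pals_xyx)
    ?(has_mem_neq_profile profile_pals_x profile_pals_yxy)
    ?(has_mem_neq_profile profile_pals_y profile_pals_xyx)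
    ?(has_mem_neq_profile profile_pals_y profile_pals_yxy)
    ?(has_mem_neq_profile profile_pals_xyx profile_pals_yxy) //.
all: by move=> k1 k2 /(congr1 size) /=; rewrite ?size_cat /= ?size_cat ?size_nseq; lia.
Qed.

Lemma pals_sub_pal_factors :
  {subset pals_x ++ pals_y ++ pals_xyx ++ pals_yxy <= pal_factors v}.
Proof.
move=> u; rewrite !mem_cat mem_pal_factors /v.
case/or4P=> /mapP[k]; rewrite mem_iota add0n => /andP[_ lt_k] -> {u};
  apply/and3P; split=> //.
- exact: palindrome_nseq.
- case: (ltnP k p) => [lt_kp | le_pk]; first exact/infix_catr/infix_nseq.
  by do 2 apply/infix_catl; apply/infix_catr/infix_nseq; lia.
- exact: palindrome_nseq.
- case: (ltnP k i) => [lt_ki | le_ik]; first exact/infix_catl/infix_catr/infix_nseq.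
  by do 3 apply/infix_catl; apply/infix_nseq; lia.
- by rewrite -{2}(rev_nseq k.+1 x) palindrome_cat_rev ?palindrome_nseq.
- rewrite [in X in infix _ X](catA (nseq i y)) [in X in infix _ X]catA.
  by apply/infix_catr/infix_nseq_cat_nseq; lia.
- by rewrite -{2}(rev_nseq k.+1 y) palindrome_cat_rev ?palindrome_nseq.
- by apply/infix_catl/infix_nseq_cat_nseq; lia.
Qed.

Lemma rich_four_blocks : rich v.
Proof.
apply: rich_of_pal_factors uniq_pals pals_sub_pal_factors _.
by rewrite !size_cat !size_map !size_iota !size_nseq; lia.
Qed.

End FourBlocks.

Section BlockReversal.
Variable T : eqType.
Implicit Types (Bs : seq (seq T)) (a b c : T).

Lemma flatten_rev_nseq Bs n c : flatten Bs = nseq n c -> flatten (rev Bs) = nseq n c.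
Proof.
move=> flat_Bs; have perm_Bs : perm_eq (flatten (rev Bs)) (nseq n c).
  by rewrite -flat_Bs; apply: perm_flatten; rewrite perm_rev.
have /all_pred1P -> : all (pred1 c) (flatten (rev Bs)).
  by rewrite (perm_all _ perm_Bs); apply/all_pred1P; rewrite size_nseq.
by rewrite (perm_size perm_Bs) size_nseq.
Qed.

Lemma flatten_rev_two_letters a b Bs n1 n2 :
  flatten Bs = nseq n1 a ++ nseq n2 b ->
  flatten (rev Bs) = nseq n2 b ++ nseq n1 a \/
  exists i j, [/\ 0 < i <= n1, 0 < j <= n2 &
    flatten (rev Bs) = nseq (n2 - j) b ++ nseq i a ++ nseq j b ++ nseq (n1 - i) a].
Proof.
elim: Bs n1 => [|B Bs IH] n1 /= flat_Bs.
  by left; case: n1 n2 flat_Bs => [|n1] [|n2].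
have le_B : size B <= n1 + n2.
  by rewrite -(size_nseq n1 a) -(size_nseq n2 b) -size_cat -flat_Bs size_cat leq_addr.
rewrite rev_cons flatten_rcons.
case: (leqP (size B) n1) => [le_Bn1 | lt_n1B].
- have split_w : nseq n1 a ++ nseq n2 b = nseq (size B) a ++ nseq (n1 - size B) a ++ nseq n2 b.
    by rewrite catA -nseqD subnKC.
  move/eqP: flat_Bs; rewrite split_w eqseq_cat ?size_nseq // => /andP[/eqP -> /eqP].
  rewrite size_nseq => flat_Bs.
  case: (IH _ flat_Bs) => [-> | [i [j [lt_i lt_j ->]]]].
    by left; rewrite -catA -nseqD; congr (_ ++ nseq _ a); lia.
  right; exists i, j; split=> //; first lia.
  by rewrite -!catA -nseqD; congr (_ ++ _ ++ _ ++ nseq _ a); lia.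
- have split_w : nseq n1 a ++ nseq n2 b =
      (nseq n1 a ++ nseq (size B - n1) b) ++ nseq (n2 - (size B - n1)) b.
    by rewrite -catA -nseqD; congr (_ ++ nseq _ b); lia.
  move/eqP: flat_Bs; rewrite split_w eqseq_cat ?size_cat ?size_nseq; last lia.
  case/andP=> /eqP -> /eqP /flatten_rev_nseq ->; rewrite size_cat !size_nseq.
  case: (posnP n1) => [n1_0 | n1_gt0].
    by left; rewrite n1_0 /= cats0 -nseqD; congr nseq; lia.
  right; exists n1, (size B - n1); split; [lia | lia |].
  by rewrite subnn cats0; congr (nseq _ b ++ _); lia.
Qed.

End BlockReversal.

Theorem mainTheorem6 (T : eqType) (a b : T) (n1 n2 : nat) :
  a != b -> 1 <= n1 -> 1 <= n2 ->
  forall v : seq T, in_BR (nseq n1 a ++ nseq n2 b) v -> rich v.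
Proof.
move=> neq_ab n1_gt0 n2_gt0 v [Bs [_ _ flat_Bs ->]].
have neq_ba : b != a by rewrite eq_sym.
case: (flatten_rev_two_letters (esym flat_Bs)) => [-> | [i [j [/andP[i_gt0 _] /andP[j_gt0 _] ->]]]].
- by have := rich_four_blocks 0 0 neq_ab n2_gt0 n1_gt0; rewrite /= cats0.
- exact: rich_four_blocks neq_ba i_gt0 j_gt0.
Qed.
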